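(* Any quantum algorithm that estimates the non-linearity $\eta(f)$ of a given Boolean function $f$ (given as an oracle) to within additive accuracy $\lambda$ uses $\Omega(1/\lambda)$ queries.
   Context: For $f:\{0,1\}^n\to\{0,1\}$, the Walsh–Hadamard coefficient at $a$ is $\hat f(a)=\frac{1}{2^n}\sum_{x}(-1)^{f(x)\oplus a\cdot x}$, $\hat f_{max}=\max_a|\hat f(a)|$, and the non-linearity is $\eta(f)=\frac12-\frac12\hat f_{max}$. The lower bound is for bounded-error algorithms that must succeed on every $f$; queries are calls to the oracle for $f$. *)

From mathcomp Require Import all_boot all_order all_algebra all_field.
Set Implicit Arguments. Unset Strict Implicit. Unset Printing Implicit Defensive.
Import Order.TTheory GRing.Theory Num.Theory.
Local Open Scope ring_scope.

Definition bitvec (n : nat) := {ffun 'I_n -> bool}.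

Definition dotb n (a x : bitvec n) : bool := odd (\sum_(i < n) (a i && x i)).

Definition walsh n (f : bitvec n -> bool) (a : bitvec n) : algC :=
  (2%:R ^+ n)^-1 * \sum_(x : bitvec n) (-1) ^+ (f x (+) dotb a x).

Definition walsh_max n (f : bitvec n -> bool) : algC :=
  \big[Num.max/0]_(a : bitvec n) `|walsh f a|.

Definition nonlinearity n (f : bitvec n -> bool) : algC :=
  2%:R^-1 - 2%:R^-1 * walsh_max f.

(* Computational basis: query register x (n qubits), answer qubit b,
   workspace register w ranging over a finite type W. *)
Definition basis n (W : finType) : finType := (bitvec n * bool * W)%type.

Definition qop (B : finType) := B -> B -> algC.
Definition qstate (B : finType) := B -> algC.

Definition apply_op (B : finType) (U : qop B) (psi : qstate B) : qstate B :=
  fun i => \sum_(j : B) U i j * psi j.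

Definition unitary (B : finType) (U : qop B) : Prop :=
  forall i j : B, \sum_(k : B) (U k i)^* * U k j = (i == j)%:R.

Definition oracle n (W : finType) (f : bitvec n -> bool) (psi : qstate (basis n W))
  : qstate (basis n W) :=
  fun i => let: (x, b, w) := i in psi (x, b (+) f x, w).

Definition init_state n (W : finType) (w0 : W) : qstate (basis n W) :=
  fun i => ((i == ([ffun => false], false, w0)) : bool)%:R.

Fixpoint run n (W : finType) (w0 : W) (U : nat -> qop (basis n W))
  (f : bitvec n -> bool) (t : nat) : qstate (basis n W) :=
  match t with
  | 0 => apply_op (U 0%N) (@init_state n W w0)
  | t'.+1 => apply_op (U t) (oracle f (run w0 U f t'))
  end.

Definition prob_out n (W : finType) (psi : qstate (basis n W))
  (out : basis n W -> algC) (P : algC -> bool) : algC :=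
  \sum_(i : basis n W | P (out i)) `|psi i| ^+ 2.

Definition estimates_nonlinearity n (W : finType) (w0 : W)
  (U : nat -> qop (basis n W)) (out : basis n W -> algC) (T : nat) (lam : algC)
  : Prop :=
  forall f : bitvec n -> bool,
    2%:R / 3%:R <= prob_out (run w0 U f T) out
                     (fun v => `|v - nonlinearity f| <= lam).

From mathcomp Require Import all_boot all_order all_algebra all_field.
From mathcomp Require Import ring zify.
Import Order.TTheory GRing.Theory Num.Theory.
Local Open Scope ring_scope.
Set Implicit Arguments. Unset Strict Implicit.

(* Fix a power of two k with 1/(32 lam) <= k < 1/(16 lam) and put N = 8 k.  Grouping
   the inputs into N blocks by their first log2 N bits, the indicator f_S of a union of
   |S| <= k + 1 blocks has non-linearity |S| / N; so for |S| = k and z outside S, the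
   functions f_S and f_(S+z) have non-linearities 1/N > 2 lam apart.  An estimator tells
   them apart with probability 2/3, which caps the overlap of the two final states at
   17/18.  A query can only lose overlap by the mass the two runs put on the block z
   where the functions differ, so the two runs put total query mass at least 1/18 on z.
   Summing over all pairs (S, z) while each run spreads total mass at most T over the
   blocks gives (N - k)(k + 1) <= 18 T (N + 1), hence k <= 21 T. *)

Lemma real_mulrn2_le_scaled (R : numFieldType) (x y t : R) :
  x \is Num.real -> y \is Num.real -> 0 < t ->
  x * y *+ 2 <= t * x ^+ 2 + t^-1 * y ^+ 2.
Proof.
move=> Rx Ry t_gt0.
have tx_real : t * x \is Num.real by apply: realM => //; exact: gtr0_real.
have t_neq0 : t != 0 by rewrite gt_eqF.
have -> : x * y *+ 2 = t^-1 * (t * x * y *+ 2) by field.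
have -> : t * x ^+ 2 + t^-1 * y ^+ 2 = t^-1 * ((t * x) ^+ 2 + y ^+ 2) by field.
by rewrite ler_pM2l ?invr_gt0 // (real_leif_mean_square_scaled tx_real Ry).1.
Qed.

Lemma ler_sum_subset (R : numDomainType) (I : finType) (P Q : pred I) (F : I -> R) :
  (forall i, P i -> Q i) -> (forall i, 0 <= F i) ->
  \sum_(i | P i) F i <= \sum_(i | Q i) F i.
Proof.
move=> PQ F_ge0; rewrite [leLHS]big_mkcond [leRHS]big_mkcond.
apply: ler_sum => i _; case: (boolP (P i)) => [/PQ -> // | _].
by case: (Q i).
Qed.

Lemma bigmax_eq_max (R : numDomainType) (I : finType) (F : I -> R) i0 :
  0 <= F i0 -> (forall i, F i <= F i0) -> \big[Num.max/0]_i F i = F i0.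
Proof.
move=> F0 Fle.
have claim r : \big[Num.max/0]_(i <- r) F i <= F i0 /\
    (i0 \in r -> \big[Num.max/0]_(i <- r) F i = F i0).
  elim: r => [|a r [le_r eq_r]]; rewrite ?big_nil ?big_cons //.
  rewrite /Num.max in_cons; split; first by case: ifP.
  case/orP => [/eqP <- | /eq_r ->]; first by rewrite (le_gtF le_r).
  by case: ifP => // /negbT; rewrite lt_neqAle Fle andbT negbK => /eqP.
by case: (claim (index_enum I)) => _; apply; rewrite mem_index_enum.
Qed.

Lemma sum_setU1 (V : nmodType) (T : finType) k (G : {set T} -> T -> V) :
  \sum_(S : {set T} | #|S| == k) \sum_(z | z \notin S) G (z |: S) z =
  \sum_(S : {set T} | #|S| == k.+1) \sum_(z in S) G S z.
Proof.
rewrite !pair_big_dep /=.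
rewrite (reindex_onto (fun p : {set T} * T => (p.1 :\ p.2, p.2))
                      (fun p => (p.2 |: p.1, p.2))) /=; last first.
  by case=> S z /= /andP [_ zS]; rewrite setU1K.
apply: eq_big => [[S z]|[S z]] /=; rewrite setD11 andbT xpair_eqE eqxx andbT.
  case zS: (z \in S); first by rewrite setD1K // (cardsD1 z S) zS add1n eqSS eqxx.
  by rewrite andbF; apply/negbTE/negP => /andP [_ /eqP eS]; rewrite -eS setU11 in zS.
by case/andP => _ /eqP ->.
Qed.

Lemma double_counting (R : numDomainType) (T : finType) k
    (F G : {set T} -> T -> R) (b c : R) :
  (k <= #|T|)%N ->
  (forall S : {set T}, #|S| = k -> \sum_(z | z \notin S) F S z <= b) ->
  (forall S : {set T}, #|S| = k.+1 -> \sum_(z in S) G S z <= b) ->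
  (forall (S : {set T}) z, #|S| = k -> z \notin S -> c <= F S z + G (z |: S) z) ->
  c * ((#|T| - k) * k.+1)%:R <= b * (#|T|.+1)%:R.
Proof.
move=> k_le FS_le GS_le FG_ge.
set nX := #|[set S : {set T} | #|S| == k]|.
set nY := #|[set S : {set T} | #|S| == k.+1]|.
have nX_gt0 : (0 < nX)%N by rewrite /nX card_draws bin_gt0.
have sum_k (x : R) : \sum_(S : {set T} | #|S| == k) x = x * nX%:R.
  by rewrite mulr_natr -sumr_const; apply: eq_bigl => S; rewrite inE.
have sum_k1 (x : R) : \sum_(S : {set T} | #|S| == k.+1) x = x * nY%:R.
  by rewrite mulr_natr -sumr_const; apply: eq_bigl => S; rewrite inE.
set pairs := \sum_(S : {set T} | #|S| == k) \sum_(z | z \notin S) (1 : R).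
have pairsX : pairs = (#|T| - k)%:R * nX%:R.
  rewrite -sum_k; apply: eq_bigr => S /eqP cardS.
  by under eq_bigl do rewrite -in_setC; rewrite sumr_const -(cardsC S) cardS addKn.
have pairsY : pairs = k.+1%:R * nY%:R.
  rewrite /pairs (sum_setU1 k (fun _ _ => 1 : R)) -sum_k1; apply: eq_bigr => S /eqP cardS.
  by rewrite -cardS -sum1_card natr_sum.
have bound : c * pairs <= b * (nX + nY)%:R.
  rewrite mulr_sumr natrD mulrDr -sum_k -sum_k1.
  apply: le_trans (_ : \sum_(S : {set T} | #|S| == k) \sum_(z | z \notin S)
                         (F S z + G (z |: S) z) <= _).
    apply: ler_sum => S /eqP cardS; rewrite mulr_sumr.
    by apply: ler_sum => z zS; rewrite mulr1; apply: FG_ge.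
  under eq_bigr do rewrite big_split; rewrite big_split /= (sum_setU1 k G).
  apply: lerD; apply: ler_sum => S /eqP; [exact: FS_le | exact: GS_le].
have -> : #|T|.+1 = (#|T| - k + k.+1)%N by rewrite addnS subnK.
have nX_pos : 0 < nX%:R :> R by rewrite ltr0n.
rewrite -(ler_pM2r nX_pos) natrM natrD.
have -> : c * ((#|T| - k)%:R * k.+1%:R) * nX%:R = k.+1%:R * (c * pairs) by rewrite pairsX; ring.
have -> : b * ((#|T| - k)%:R + k.+1%:R) * nX%:R = k.+1%:R * (b * (nX + nY)%:R).
  rewrite natrD; transitivity (b * ((#|T| - k)%:R * nX%:R + k.+1%:R * nX%:R)); first by ring.
  by rewrite -pairsX pairsY; ring.
by rewrite ler_wpM2l ?ler0n.
Qed.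

Lemma exists_exp2n_between (R : archiNumFieldType) (x : R) :
  0 < x -> x < 1 -> exists j, 1 <= x * (2 ^ j)%:R /\ x * (2 ^ j)%:R < 2.
Proof.
move=> x_gt0 x_lt1; have xV_gt0 : 0 < x^-1 by rewrite invr_gt0.
have ex_j : exists j, 1 <= x * (2 ^ j)%:R.
  exists (Num.bound x^-1); rewrite -(ler_pM2l xV_gt0) mulr1 mulKf ?gt_eqF //.
  apply: ltW; apply: lt_le_trans (archi_boundP (ltW xV_gt0)) _.
  by rewrite ler_nat ltnW // ltn_expl.
case: (ex_minnP ex_j) => -[|j] le_j min_j; first by rewrite mulr1 lt_geF in le_j.
exists j.+1; split=> //; rewrite expnS natrM mulrCA -[2 in ltRHS]mulr1 ltr_pM2l //.
have : ~~ (1 <= x * (2 ^ j)%:R) by apply/negP => /min_j; rewrite ltnn.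
by rewrite real_leNgt ?negbK // realM ?realn // gtr0_real.
Qed.

Section Walsh.
Variable n : nat.
Local Notation zero := ([ffun => false] : bitvec n).

Lemma card_bitvec : #|bitvec n| = (2 ^ n)%N.
Proof. by rewrite card_ffun card_bool card_ord. Qed.

Lemma dot0b (x : bitvec n) : dotb zero x = false.
Proof. by rewrite /dotb big1 // => i _; rewrite ffunE. Qed.

Lemma sum_sign_dotb (a : bitvec n) : a != zero ->
  \sum_(x : bitvec n) (-1) ^+ dotb a x = 0 :> algC.
Proof.
move=> a_neq0; have [i ai | a0] := pickP (fun i => a i); last first.
  by case/eqP: a_neq0; apply/ffunP => i; rewrite ffunE a0.
pose flip (x : bitvec n) : bitvec n := [ffun j => if j == i then ~~ x j else x j].
have flipK : involutive flip.
  by move=> x; apply/ffunP => j; rewrite !ffunE; case: (j == i); rewrite ?negbK.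
have dot_flip x : dotb a (flip x) = ~~ dotb a x.
  rewrite /dotb (bigD1 i) //= [in RHS](bigD1 i) //= ffunE eqxx ai /=.
  rewrite !oddD !oddb addNb; congr (~~ (_ (+) odd _)).
  by apply: eq_bigr => j /negbTE ji; rewrite ffunE ji.
set s := \sum_x _; have : s = - s.
  rewrite {1}/s (reindex_inj (inv_inj flipK)) -sumrN.
  by apply: eq_bigr => x _; rewrite dot_flip signrN.
by move/eqP; rewrite -addr_eq0 -mulr2n mulrn_eq0 => /eqP.
Qed.

Lemma walshE (f : bitvec n -> bool) a : walsh f a =
  (\sum_x (-1) ^+ dotb a x - 2 * \sum_(x | f x) (-1) ^+ dotb a x) / 2 ^+ n.
Proof.
rewrite /walsh mulrC; congr (_ / _); rewrite [X in 2 * X]big_mkcond mulr_sumr -sumrB.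
by apply: eq_bigr => x _; rewrite signr_addb; case: (f x); rewrite ?expr1 ?expr0 /=; ring.
Qed.

Variable f : bitvec n -> bool.
Local Notation w := #|[pred x | f x]|.

Lemma walsh0 : walsh f zero = 1 - 2 * w%:R / 2 ^+ n.
Proof.
rewrite walshE; under eq_bigr do rewrite dot0b expr0.
under [X in 2 * X]eq_bigr do rewrite dot0b expr0.
rewrite !sumr_const cardT -cardE card_bitvec natrX mulrBl divff //.
by rewrite expf_neq0 // pnatr_eq0.
Qed.

Lemma norm_walsh_le a : a != zero -> `|walsh f a| <= 2 * w%:R / 2 ^+ n.
Proof.
move=> a_neq0; rewrite walshE sum_sign_dotb // sub0r normrM normrN normrM normr_nat.
rewrite normfV normrX normr_nat ler_pM2r ?invr_gt0 ?exprn_gt0 ?ltr0n // ler_pM2l ?ltr0n //.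
apply: le_trans (ler_norm_sum _ _ _) _.
by rewrite (eq_bigr (fun=> 1)) => [|x _]; rewrite ?sumr_const // normrX normrN normr1 expr1n.
Qed.

Lemma nonlinearity_sparse : (4 * w <= 2 ^ n)%N -> nonlinearity f = w%:R / (2 ^ n)%:R.
Proof.
move=> sparse; set d : algC := 2 * w%:R / 2 ^+ n.
have d_ge0 : 0 <= d by rewrite divr_ge0 ?mulr_ge0 ?exprn_ge0 ?ler0n.
have d_le : d <= 1 - d.
  rewrite -subr_ge0 (_ : _ - d = (2 ^+ n - 4 * w%:R) / 2 ^+ n); last first.
    by rewrite /d; field; rewrite expf_neq0 // pnatr_eq0.
  by rewrite divr_ge0 ?exprn_ge0 // subr_ge0 -natrX -natrM ler_nat.
have walsh0d : walsh f zero = 1 - d by rewrite walsh0.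
have max0 : walsh_max f = 1 - d.
  have d'_ge0 : 0 <= 1 - d := le_trans d_ge0 d_le.
  rewrite /walsh_max -[1 - d](ger0_norm d'_ge0) -walsh0d; apply: bigmax_eq_max => // a.
  have [-> // | a_neq0] := eqVneq a zero.
  by rewrite walsh0d (ger0_norm d'_ge0) (le_trans (norm_walsh_le a_neq0)).
rewrite /nonlinearity max0 /d natrX; field.
by rewrite expf_neq0 // pnatr_eq0.
Qed.

End Walsh.

Section Prefix.
Variables (n m : nat) (le_mn : (m <= n)%N).

Definition prefix (x : bitvec n) : bitvec m := [ffun i => x (widen_ord le_mn i)].

Lemma card_prefix_fiber z : #|[pred x | prefix x == z]| = (2 ^ (n - m))%N.
Proof.
pose F (i : 'I_n) : pred bool :=
  fun b => if insub (val i) is Some j then b == z j else true.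
have fiberE : [pred x | prefix x == z] =i (family F : simpl_pred (bitvec n)).
  move=> x; rewrite inE; apply/eqP/familyP => [eq_z i | Fx].
    rewrite /F unfold_in; case: insubP => [j _ ij|] //.
    by rewrite -eq_z ffunE; apply/eqP; congr (x _); apply: val_inj.
  apply/ffunP => j; rewrite ffunE; have := Fx (widen_ord le_mn j).
  rewrite /F unfold_in; case: insubP => [j' _ jj'|] /=; last by rewrite ltn_ord.
  by move/eqP => ->; congr (z _); apply: val_inj.
rewrite (eq_card fiberE) card_family foldrE big_image /= (eq_bigl xpredT) //.
rewrite (eq_bigr (fun i : 'I_n => if (i < m)%N then 1 else 2)%N); last first.
  move=> i _; rewrite /F; case: insubP => [j -> _|/negbTE ->] /=.
    by rewrite (@eq_card _ _ (pred1 (z j))) ?card1 // => b; rewrite !inE.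
  by rewrite (@eq_card _ _ predT) ?card_bool.
rewrite -(big_mkord xpredT (fun i => if (i < m)%N then 1 else 2)%N).
rewrite (big_cat_nat (leq0n m) le_mn) /= big_nat_cond big1 ?mul1n => [|i /andP [/andP [_ ->]]] //.
rewrite (@eq_big_nat _ _ _ m n _ (fun=> 2%N)) ?prod_nat_const_nat // => i /andP [m_le _].
by rewrite ltnNge m_le.
Qed.

Lemma card_prefix_preimage (S : {set bitvec m}) :
  #|[pred x | prefix x \in S]| = (#|S| * 2 ^ (n - m))%N.
Proof.
rewrite -[LHS]sum1_card (partition_big prefix (fun z => z \in S)) //= -sum_nat_const.
apply: eq_bigr => z zS; rewrite -(card_prefix_fiber z) -sum1_card.
by apply: eq_bigl => x; rewrite !inE; case: eqP => [->|]; rewrite ?zS ?andbF.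
Qed.

Lemma nonlinearity_prefix (S : {set bitvec m}) : (4 * #|S| <= 2 ^ m)%N ->
  nonlinearity (fun x => prefix x \in S) = #|S|%:R / (2 ^ m)%:R.
Proof.
move=> sparse; have exp2n : (2 ^ n = 2 ^ m * 2 ^ (n - m))%N by rewrite -expnD subnKC.
rewrite nonlinearity_sparse card_prefix_preimage exp2n.
  by rewrite !natrM -mulf_div divff ?mulr1 // pnatr_eq0 -lt0n expn_gt0.
by rewrite mulnA leq_mul2r sparse orbT.
Qed.
End Prefix.

Section QueryStates.
Variables (n : nat) (W : finType).
Local Notation B := (basis n W).
Implicit Types (psi phi : qstate B) (f g : bitvec n -> bool).

Definition braket psi phi : algC := \sum_i (psi i)^* * phi i.

Definition query_mass psi (A : pred (bitvec n)) : algC :=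
  \sum_(i : B | A i.1.1) `|psi i| ^+ 2.

Lemma braket_diag psi : braket psi psi = \sum_i `|psi i| ^+ 2.
Proof. by apply: eq_bigr => i _; rewrite normCKC. Qed.

Lemma braket_unitary (U : qop B) psi phi : unitary U ->
  braket (apply_op U psi) (apply_op U phi) = braket psi phi.
Proof.
rewrite /braket /apply_op => U_unitary.
under eq_bigr do rewrite rmorph_sum mulr_suml.
under eq_bigr do under eq_bigr do rewrite mulr_sumr.
rewrite exchange_big; apply: eq_bigr => j _; rewrite exchange_big /=.
transitivity (\sum_k (psi j)^* * phi k * \sum_i (U i j)^* * U i k).
  apply: eq_bigr => k _; rewrite mulr_sumr; apply: eq_bigr => i _.
  by rewrite rmorphM /=; ring.
under eq_bigr do rewrite U_unitary.
rewrite (bigD1 j) //= eqxx mulr1 big1 ?addr0 // => k /negbTE.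
by rewrite eq_sym => ->; rewrite mulr0.
Qed.

Lemma braket_init (w0 : W) : braket (init_state w0) (init_state w0) = 1.
Proof.
rewrite /braket (bigD1 ([ffun => false], false, w0)) //= /init_state eqxx.
by rewrite big1 ?addr0 ?conjC1 ?mulr1 // => i /negbTE ->; rewrite mulr0.
Qed.

Lemma query_mass_ge0 psi A : 0 <= query_mass psi A.
Proof. by apply: sumr_ge0 => i _; apply: exprn_ge0. Qed.

Lemma eq_query_mass psi (A A' : pred (bitvec n)) :
  A =1 A' -> query_mass psi A = query_mass psi A'.
Proof. by move=> eqA; apply: eq_bigl => i; rewrite eqA. Qed.

Lemma sum_query_mass_fibers (J : finType) (p : bitvec n -> J) psi :
  \sum_(j : J) query_mass psi [pred x | p x == j] = braket psi psi.
Proof. by rewrite braket_diag (partition_big (fun i : B => p i.1.1) xpredT). Qed.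

Definition flip_answer (i : B) : B := (i.1.1, ~~ i.1.2, i.2).

Lemma flip_answerK : involutive flip_answer.
Proof. by case=> [[x b] w]; rewrite /flip_answer /= negbK. Qed.

Lemma braket_oracles f g psi phi : braket (oracle f psi) (oracle g phi) =
  \sum_i (psi i)^* * phi (i.1.1, i.1.2 (+) (f i.1.1 (+) g i.1.1), i.2).
Proof.
pose h (i : B) : B := (i.1.1, i.1.2 (+) f i.1.1, i.2).
have hK : involutive h by case=> [[x b] w]; rewrite /h /= addbK.
rewrite /braket (reindex_inj (inv_inj hK)); apply: eq_bigr => -[[x b] w] _.
by rewrite /h /= addbK addbA.
Qed.

Lemma dist_braket_oracle f g psi phi :
  `|braket psi phi - braket (oracle f psi) (oracle g phi)| <=
    query_mass psi [pred x | f x != g x] + query_mass phi [pred x | f x != g x].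
Proof.
(* Off D the two oracles act alike; on D they differ by a flip of the answer bit. *)
set D := [pred x | f x != g x].
have mean (u v : algC) : `|u| * `|v| <= (`|u| ^+ 2 + `|v| ^+ 2) / 2.
  exact: (real_leif_mean_square (normr_real u) (normr_real v)).1.
rewrite braket_oracles /braket -sumrB; apply: le_trans (ler_norm_sum _ _ _) _.
apply: le_trans (_ : \sum_(i | D i.1.1) ((`|psi i| ^+ 2 + `|phi i| ^+ 2) / 2 +
                       (`|psi i| ^+ 2 + `|phi (flip_answer i)| ^+ 2) / 2) <= _).
  rewrite [leRHS]big_mkcond; apply: ler_sum => -[[x b] w] _ /=.
  have [eq_fg | neq_fg] := eqVneq (f x) (g x).
    by rewrite eq_fg addbb addbF subrr normr0.
  have -> : f x (+) g x = true by move: neq_fg; case: (f x); case: (g x).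
  rewrite addbT -mulrBr normrM norm_conjC.
  apply: le_trans (ler_wpM2l (normr_ge0 _) (ler_normB _ _)) _.
  by rewrite mulrDr lerD ?mean.
have flip_mass : \sum_(i | D i.1.1) `|phi (flip_answer i)| ^+ 2 = query_mass phi D.
  by rewrite [RHS](reindex_inj (inv_inj flip_answerK)).
rewrite big_split -!mulr_suml !big_split /= flip_mass.
by rewrite [leRHS]splitr.
Qed.

Lemma braket_oracle f psi phi : braket (oracle f psi) (oracle f phi) = braket psi phi.
Proof.
apply/esym/eqP; rewrite -subr_eq0 -normr_le0.
apply: le_trans (dist_braket_oracle f f psi phi) _.
by rewrite /query_mass !big_pred0 ?addr0 // => i; rewrite /= eqxx.
Qed.

Lemma norm_braket_le_separated psi phi (P : pred B) :
  braket psi psi = 1 -> braket phi phi = 1 ->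
  2 / 3 <= \sum_(i | P i) `|psi i| ^+ 2 -> 2 / 3 <= \sum_(i | ~~ P i) `|phi i| ^+ 2 ->
  `|braket psi phi| <= 17 / 18.
Proof.
rewrite !braket_diag (bigID P) [X in _ -> X = 1 -> _](bigID P) /=.
set pA := \sum_(i | P i) _; set pC := \sum_(i | ~~ P i) `|psi i| ^+ 2.
set qA := \sum_(i | P i) _; set qC := \sum_(i | ~~ P i) `|phi i| ^+ 2.
move=> psi1 phi1 pA_ge qC_ge.
(* Weighted AM-GM with weight 3/4 where psi is likely to land and 4/3 where phi is. *)
have w_gt0 : 0 < 3 / 4 :> algC by rewrite divr_gt0 ?ltr0n.
have wV_gt0 : 0 < (3 / 4)^-1 :> algC by rewrite invr_gt0.
have bound : `|braket psi phi| *+ 2 <=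
    3 / 4 * pA + (3 / 4)^-1 * qA + ((3 / 4)^-1 * pC + (3 / 4)^-1^-1 * qC).
  apply: le_trans (_ : (\sum_i `|psi i| * `|phi i|) *+ 2 <= _).
    rewrite lerMn2r /=; apply: le_trans (ler_norm_sum _ _ _) _.
    by apply: ler_sum => i _; rewrite normrM norm_conjC.
  rewrite -sumrMnl (bigID P) /= /pA /pC /qA /qC !mulr_sumr -!big_split /=.
  by apply: lerD; apply: ler_sum => i _; apply: real_mulrn2_le_scaled; rewrite ?normr_real.
rewrite -(ler_pMn2r (_ : 0 < 2)%N) //; apply: le_trans bound _.
have -> : pC = 1 - pA by rewrite -psi1 addrC addrK.
have -> : qA = 1 - qC by rewrite -phi1 addrK.
rewrite -subr_ge0 (_ : _ - _ = 7 / 12 * ((pA - 2 / 3) + (qC - 2 / 3))); last by field.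
by rewrite mulr_ge0 ?divr_ge0 ?ler0n // addr_ge0 // subr_ge0.
Qed.

End QueryStates.

Section QueryLowerBound.
Variables (n : nat) (W : finType) (w0 : W) (U : nat -> qop (basis n W)).
Variables (out : basis n W -> algC) (T : nat) (lam : algC).
Hypothesis U_unitary : forall t, (t <= T)%N -> unitary (U t).
Hypothesis estimates : estimates_nonlinearity w0 U out T lam.
Local Notation run := (run w0 U).

Lemma braket_run f t : (t <= T)%N -> braket (run f t) (run f t) = 1.
Proof.
elim: t => [|t IHt] le_tT /=; rewrite braket_unitary; try exact: U_unitary.
  exact: braket_init.
by rewrite braket_oracle IHt // ltnW.
Qed.

Lemma dist_braket_run f g t : (t <= T)%N ->
  `|1 - braket (run f t) (run g t)| <=
  \sum_(s < t) (query_mass (run f s) [pred x | f x != g x] +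
                query_mass (run g s) [pred x | f x != g x]).
Proof.
elim: t => [|t IHt] le_tT.
  rewrite big_ord0 /= braket_unitary ?braket_init ?subrr ?normr0 //; exact: U_unitary.
rewrite big_ord_recr /= braket_unitary; last exact: U_unitary.
apply: le_trans (ler_distD (braket (run f t) (run g t)) _ _) _.
by apply: lerD; [exact: IHt (ltnW le_tT) | exact: dist_braket_oracle].
Qed.

Lemma disagreement_mass_ge f g : 2 * lam < `|nonlinearity f - nonlinearity g| ->
  1 / 18 <= \sum_(s < T) (query_mass (run f s) [pred x | f x != g x] +
                          query_mass (run g s) [pred x | f x != g x]).
Proof.
move=> far; apply: le_trans _ (dist_braket_run f g (leqnn T)).
apply: le_trans _ (lerB_dist 1 _); rewrite normr1 -[1 / 18](addrK (17 / 18)).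
have -> : 1 / 18 + 17 / 18 = 1 :> algC by field.
rewrite lerB //; apply: (norm_braket_le_separated (P := fun i => `|out i - nonlinearity f| <= lam)).
- exact: braket_run.
- exact: braket_run.
- exact: estimates.
apply: le_trans (estimates g) _; rewrite /prob_out.
apply: ler_sum_subset => [i near_g | i]; last exact: exprn_ge0.
apply/negP => near_f; move: far; rewrite le_gtF // mulr_natl mulr2n.
by apply: le_trans (ler_distD (out i) _ _) _; rewrite distrC lerD.
Qed.

Lemma query_lower_bound_prefix m (le_mn : (m <= n)%N) k :
  (4 * k.+1 <= 2 ^ m)%N -> 2 * lam * (2 ^ m)%:R < 1 ->
  ((2 ^ m - k) * k.+1 <= 18 * T * (2 ^ m).+1)%N.
Proof.
move=> sparse far.
pose fS (S : {set bitvec m}) x := prefix le_mn x \in S.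
pose mass_on S z := \sum_(s < T) query_mass (run (fS S) s) [pred x | prefix le_mn x == z].
have mass_on_le S (A : pred (bitvec m)) : \sum_(z | A z) mass_on S z <= T%:R.
  rewrite exchange_big /= -[T in leRHS]card_ord -sumr_const; apply: ler_sum => s _.
  apply: le_trans (ler_sum_subset (Q := xpredT) _ _) _ => // [z|].
    exact: query_mass_ge0.
  by rewrite sum_query_mass_fibers braket_run // ltnW.
have eta_fS (S : {set bitvec m}) : (#|S| <= k.+1)%N -> nonlinearity (fS S) = #|S|%:R / (2 ^ m)%:R.
  by move=> le_Sk; apply: nonlinearity_prefix; apply: leq_trans sparse; rewrite leq_mul2l.
have pair_bound (S : {set bitvec m}) z : #|S| = k -> z \notin S ->
    1 / 18 <= mass_on S z + mass_on (z |: S) z.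
  move=> cardS zS.
  have disagree : [pred x | fS S x != fS (z |: S) x] =1 [pred x | prefix le_mn x == z].
    move=> x; rewrite /fS /= !inE.
    case: (prefix le_mn x =P z) => [->|_] /=; first by rewrite (negbTE zS).
    by case: (_ \in S).
  rewrite /mass_on -big_split /=.
  under eq_bigr do rewrite -!(eq_query_mass _ disagree).
  apply: disagreement_mass_ge.
  have pow_gt0 : 0 < (2 ^ m)%:R :> algC by rewrite ltr0n expn_gt0.
  rewrite !eta_fS ?cardsU1 ?zS ?cardS // distrC -mulrBl natrD addrK.
  by rewrite ger0_norm ?divr_ge0 ?ler0n // ltr_pdivlMr.
have k_le : (k <= #|bitvec m|)%N by rewrite card_bitvec; apply: leq_trans sparse; lia.
have := double_counting k_le (fun S _ => mass_on_le S _) (fun S _ => mass_on_le S _) pair_bound.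
rewrite card_bitvec mul1r ler_pdivrMl ?ltr0n // => bound.
by rewrite -(ler_nat algC) !natrM -mulrA -natrM.
Qed.

End QueryLowerBound.

Theorem lemma6 :
  exists (c lam0 : algC), 0 < c /\ 0 < lam0 /\
    forall lam : algC, 0 < lam -> lam < lam0 ->
    exists N : nat, forall n : nat, (N <= n)%N ->
    forall (W : finType) (w0 : W) (U : nat -> qop (basis n W))
           (out : basis n W -> algC) (T : nat),
      (forall t : nat, (t <= T)%N -> unitary (U t)) ->
      (forall i, out i \is Num.real) ->
      estimates_nonlinearity w0 U out T lam ->
      c / lam <= T%:R.
Proof.
exists (1 / 672), (1 / 32); split; [|split]; rewrite ?divr_gt0 ?ltr0n //.
move=> lam lam_gt0 lam_lt.
have x_gt0 : 0 < 32 * lam by rewrite mulr_gt0 ?ltr0n.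
have x_lt1 : 32 * lam < 1 by rewrite mulrC -ltr_pdivlMr ?ltr0n.
have [j [k_ge k_lt]] := exists_exp2n_between x_gt0 x_lt1.
set k := (2 ^ j)%N in k_ge k_lt; have k_gt0 : (0 < k)%N by rewrite expn_gt0.
have exp2E : (2 ^ (j + 3) = 8 * k)%N by rewrite expnD mulnC.
(* Only outcome probabilities matter. *)
exists (j + 3)%N => n le_mn W w0 U out T U_unitary _ estimates.
have := query_lower_bound_prefix U_unitary estimates le_mn (k := k).
rewrite exp2E; have sparse : (4 * k.+1 <= 8 * k)%N by lia.
have far : 2 * lam * (8 * k)%:R < 1.
  rewrite -(ltr_pM2l (_ : 0 < 2)) ?ltr0n // mulr1.
  by rewrite (_ : 2 * (2 * lam * (8 * k)%:R) = 32 * lam * k%:R) // natrM; ring.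
move=> /(_ sparse far) bound; have k_le : (k <= 21 * T)%N by nia.
rewrite ler_pdivrMr // ler_pdivrMr ?ltr0n //; apply: le_trans k_ge _.
by rewrite (_ : _ * 672 = 32 * lam * (21 * T)%:R) ?ler_pM2l ?ler_nat // natrM; ring.
Qed.
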